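(* Let $\langle X,d\rangle$ be a metric space. Then the family of real-valued strongly uniformly locally Lipschitz functions on $X$ is closed under pointwise multiplication if and only if $X$ is strongly uniformly locally bounded.
   Context: For $\varepsilon>0$, an $\varepsilon$-chain joining $x,y\in X$ is a finite sequence $x=x_0,\dots,x_n=y$ with $d(x_{i-1},x_i)<\varepsilon$; $S^\infty_d(x,\varepsilon)$ is the set of points joinable to $x$ by an $\varepsilon$-chain. $X$ is strongly uniformly locally bounded if there is $\delta>0$ such that $S^\infty_d(x,\delta)$ is bounded for every $x\in X$. A function $f:X\to\mathbb{R}$ is strongly uniformly locally Lipschitz if there is $\delta>0$ such that for every $x\in X$ the restriction of $f$ to $S^\infty_d(x,\delta)$ is Lipschitz (constant may depend on $x$). *)

From Stdlib Require Import Reals.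
Open Scope R_scope.

Definition is_metric {X : Type} (d : X -> X -> R) : Prop :=
  (forall x y, 0 <= d x y) /\
  (forall x y, d x y = 0 <-> x = y) /\
  (forall x y, d x y = d y x) /\
  (forall x y z, d x z <= d x y + d y z).

Definition eps_chain {X : Type} (d : X -> X -> R) (eps : R) (x y : X) : Prop :=
  exists (n : nat) (c : nat -> X),
    c 0%nat = x /\ c n = y /\
    (forall i : nat, (1 <= i <= n)%nat -> d (c (i - 1)%nat) (c i) < eps).

Definition S_inf {X : Type} (d : X -> X -> R) (x : X) (eps : R) : X -> Prop :=
  fun y => eps_chain d eps x y.

Definition bounded_set {X : Type} (d : X -> X -> R) (A : X -> Prop) : Prop :=
  exists M : R, forall a b, A a -> A b -> d a b <= M.

Definition strongly_unif_loc_bounded {X : Type} (d : X -> X -> R) : Prop :=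
  exists delta : R, 0 < delta /\ forall x : X, bounded_set d (S_inf d x delta).

Definition lipschitz_on {X : Type} (d : X -> X -> R) (A : X -> Prop) (f : X -> R) : Prop :=
  exists K : R, 0 <= K /\ forall a b, A a -> A b -> Rabs (f a - f b) <= K * d a b.

Definition strongly_unif_loc_lipschitz {X : Type} (d : X -> X -> R) (f : X -> R) : Prop :=
  exists delta : R, 0 < delta /\ forall x : X, lipschitz_on d (S_inf d x delta) f.

(* A Lipschitz function on a bounded set is bounded there, and then
   |fg(a) - fg(b)| <= |f a| |g a - g b| + |g b| |f a - f b| makes the product
   Lipschitz; so strong uniform local boundedness gives closure under products.
   Conversely, apply closure to f = g = d(., p).  If d(., p)^2 is K-Lipschitz on
   S^oo(x, delta), then with r = d(x, p) and s = d(a, p) we get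
   (s - r)(s + r) <= K d(x, a) <= K (s + r), hence d(a, p) <= d(x, p) + K, and S^oo(x, delta)
   is bounded. *)

From Stdlib Require Import Reals Lra Lia Classical.
Open Scope R_scope.

Section ChainsAndLipschitz.

Variables (X : Type) (d : X -> X -> R).

Lemma S_inf_refl (x : X) (eps : R) : S_inf d x eps x.
Proof.
  exists 0%nat, (fun _ => x); repeat split.
  intros i Hi; lia.
Qed.

Lemma S_inf_le (x : X) (e1 e2 : R) :
  e1 <= e2 -> forall y, S_inf d x e1 y -> S_inf d x e2 y.
Proof.
  intros He y [n [c [H0 [Hn Hc]]]].
  exists n, c; repeat split; auto.
  intros i Hi; specialize (Hc i Hi); lra.
Qed.

Lemma bounded_set_subset (A B : X -> Prop) :
  (forall a, A a -> B a) -> bounded_set d B -> bounded_set d A.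
Proof.
  intros HAB [M HM]; exists M; auto.
Qed.

Lemma lipschitz_on_subset (A B : X -> Prop) (f : X -> R) :
  (forall a, A a -> B a) -> lipschitz_on d B f -> lipschitz_on d A f.
Proof.
  intros HAB [K [HK Hf]]; exists K; split; auto.
Qed.

Lemma lipschitz_on_bounded_fun (A : X -> Prop) (f : X -> R) :
  bounded_set d A -> lipschitz_on d A f ->
  exists B, 0 <= B /\ forall a, A a -> Rabs (f a) <= B.
Proof.
  intros [M HM] [K [HK Hf]].
  destruct (classic (exists x, A x)) as [[x Hx] | Hempty].
  2: { exists 0; split; [lra|]; intros a Ha; exfalso; eauto. }
  exists (Rabs (f x) + K * Rabs M); split.
  { pose proof (Rabs_pos (f x)); pose proof (Rabs_pos M); nra. }
  intros a Ha.
  assert (Hfa : Rabs (f a) <= Rabs (f a - f x) + Rabs (f x)).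
  { replace (f a) with ((f a - f x) + f x) at 1 by ring; apply Rabs_triang. }
  assert (Hdist : K * d a x <= K * Rabs M).
  { apply Rmult_le_compat_l; auto.
    eapply Rle_trans; [apply HM; auto | apply Rle_abs]. }
  pose proof (Hf a x Ha Hx); lra.
Qed.

Lemma lipschitz_on_mult (A : X -> Prop) (f g : X -> R) :
  bounded_set d A -> lipschitz_on d A f -> lipschitz_on d A g ->
  lipschitz_on d A (fun x => f x * g x).
Proof.
  intros HA Hf Hg.
  destruct (lipschitz_on_bounded_fun A f HA Hf) as [Bf [HBf Bf_bound]].
  destruct (lipschitz_on_bounded_fun A g HA Hg) as [Bg [HBg Bg_bound]].
  destruct Hf as [Kf [HKf Hf]], Hg as [Kg [HKg Hg]].
  exists (Bf * Kg + Bg * Kf); split; [nra|].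
  intros a b Ha Hb.
  replace (f a * g a - f b * g b) with (f a * (g a - g b) + g b * (f a - f b)) by ring.
  eapply Rle_trans; [apply Rabs_triang|]; rewrite !Rabs_mult.
  assert (Rabs (f a) * Rabs (g a - g b) <= Bf * (Kg * d a b))
    by (apply Rmult_le_compat; auto using Rabs_pos).
  assert (Rabs (g b) * Rabs (f a - f b) <= Bg * (Kf * d a b))
    by (apply Rmult_le_compat; auto using Rabs_pos).
  lra.
Qed.

Lemma strongly_unif_loc_lipschitz_mult (f g : X -> R) :
  strongly_unif_loc_bounded d ->
  strongly_unif_loc_lipschitz d f -> strongly_unif_loc_lipschitz d g ->
  strongly_unif_loc_lipschitz d (fun x => f x * g x).
Proof.
  intros [e0 [He0 HB]] [ef [Hef Hf]] [eg [Heg Hg]].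
  set (e := Rmin e0 (Rmin ef eg)).
  assert (He_e0 : e <= e0) by apply Rmin_l.
  assert (He_ef : e <= ef) by (eapply Rle_trans; [apply Rmin_r | apply Rmin_l]).
  assert (He_eg : e <= eg) by (eapply Rle_trans; [apply Rmin_r | apply Rmin_r]).
  exists e; split; [repeat apply Rmin_pos; auto|].
  intros x.
  apply lipschitz_on_mult.
  - apply (bounded_set_subset _ _ (S_inf_le x e e0 He_e0) (HB x)).
  - apply (lipschitz_on_subset _ _ f (S_inf_le x e ef He_ef) (Hf x)).
  - apply (lipschitz_on_subset _ _ g (S_inf_le x e eg He_eg) (Hg x)).
Qed.

Hypothesis hd : is_metric d.

Lemma strongly_unif_loc_lipschitz_dist (p : X) :
  strongly_unif_loc_lipschitz d (fun y => d y p).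
Proof.
  destruct hd as [_ [_ [Hsym Htri]]].
  exists 1; split; [lra|]; intros x.
  exists 1; split; [lra|]; intros a b _ _.
  pose proof (Htri a b p); pose proof (Htri b a p); rewrite (Hsym b a) in *.
  apply Rabs_le; lra.
Qed.

Lemma bounded_set_of_lipschitz_dist_sq (A : X -> Prop) (p x : X) :
  lipschitz_on d A (fun y => d y p * d y p) -> A x -> bounded_set d A.
Proof.
  destruct hd as [Hpos [_ [Hsym Htri]]].
  intros [K [HK Hsq]] Hx.
  assert (Hball : forall a, A a -> d a p <= d x p + K).
  { intros a Ha.
    pose proof (Hsq a x Ha Hx) as Hl.
    pose proof (Rle_abs (d a p * d a p - d x p * d x p)).
    assert (d a x <= d a p + d x p) by (rewrite (Hsym x p); apply Htri).
    pose proof (Hpos a p); pose proof (Hpos x p); pose proof (Hpos a x).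
    destruct (Rle_or_lt (d a p) (d x p + K)); auto.
    exfalso; nra. }
  exists (2 * (d x p + K)); intros a b Ha Hb.
  pose proof (Htri a p b); rewrite (Hsym p b) in *.
  pose proof (Hball a Ha); pose proof (Hball b Hb); lra.
Qed.

Lemma strongly_unif_loc_bounded_of_mult_closed :
  (forall f g : X -> R,
      strongly_unif_loc_lipschitz d f -> strongly_unif_loc_lipschitz d g ->
      strongly_unif_loc_lipschitz d (fun x => f x * g x)) ->
  strongly_unif_loc_bounded d.
Proof.
  intros Hmult.
  destruct (classic (inhabited X)) as [[p] | Hempty].
  2: { exists 1; split; [lra|]; intros x; exfalso; exact (Hempty (inhabits x)). }
  pose proof (strongly_unif_loc_lipschitz_dist p) as Hdist.
  destruct (Hmult _ _ Hdist Hdist) as [e [He Hsq]].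
  exists e; split; auto; intros x.
  exact (bounded_set_of_lipschitz_dist_sq _ p x (Hsq x) (S_inf_refl x e)).
Qed.

End ChainsAndLipschitz.

Theorem mainTheorem5 (X : Type) (d : X -> X -> R) (hd : is_metric d) :
  (forall f g : X -> R,
      strongly_unif_loc_lipschitz d f -> strongly_unif_loc_lipschitz d g ->
      strongly_unif_loc_lipschitz d (fun x => f x * g x))
  <-> strongly_unif_loc_bounded d.
Proof.
  split.
  - exact (strongly_unif_loc_bounded_of_mult_closed X d hd).
  - intros HB f g; exact (strongly_unif_loc_lipschitz_mult X d f g HB).
Qed.
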